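(* Let $G$ be a finite Frobenius group with Frobenius kernel $K$ and Frobenius complement $H$, so that $G = K \rtimes H$, and suppose that $K$ and $H$ are both abelian, with $|K| = k$ and $|H| = h$. Then \[ AMZA(G) = AMZL(G) = 1 + \frac{2(h^2-1)}{h}\left(1 - \frac{h-1}{k}\right)\left(1 - \frac{1}{k}\right). \]
   Context: A finite group $G$ is a Frobenius group if it has a proper non-trivial subgroup $H$ with $H \cap gHg^{-1} = \{e\}$ for all $g \in G \setminus H$; then $K = \left(G \setminus \bigcup_{g \in G} gHg^{-1}\right) \cup \{e\}$ is a normal subgroup (the Frobenius kernel), $H$ is called the Frobenius complement, and $G = K \rtimes H$. For a finite group $G$, $\mathrm{Irr}(G)$ is the set of irreducible complex characters, $d_\chi = \chi(e)$ is the degree of $\chi$, $\mathrm{Conj}(G)$ is the set of conjugacy classes, $|C|$ is the size of a class $C$, and $\chi(C)$ is the value of $\chi$ on $C$. The amenability constant of a Banach algebra $\mathcal{A}$ is $AM(\mathcal{A}) = \inf\{\sup_\alpha \|d_\alpha\| : (d_\alpha) \text{ a bounded approximate diagonal}\}$, where a bounded approximate diagonal is a bounded net $(d_\alpha)$ in the projective tensor product $\mathcal{A}\hat\otimes\mathcal{A}$ with $a\cdot d_\alpha - d_\alpha\cdot a \to 0$ and $a\, m(d_\alpha) \to a$ for all $a\in\mathcal{A}$ ($m$ the multiplication map); $AM(\mathcal{A})=\infty$ if none exists. $ZL^1(G)$ is the centre of the group algebra $L^1(G)$ (the class functions with the $L^1$ norm), and $ZA(G)$ is the closed span of $\mathrm{Irr}(G)$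 in the Fourier algebra $A(G)$ (the class functions with the Fourier algebra norm). Write $AMZL(G) = AM(ZL^1(G))$ and $AMZA(G) = AM(ZA(G))$. For finite $G$ these are given by \[ AMZL(G) = \frac{1}{|G|^2}\sum_{C,C'\in\mathrm{Conj}(G)} |C||C'|\left|\sum_{\chi\in\mathrm{Irr}(G)} d_\chi^2\,\chi(C)\overline{\chi(C')}\right|,\qquad AMZA(G) = \frac{1}{|G|^2}\sum_{\chi,\chi'\in\mathrm{Irr}(G)} d_\chi d_{\chi'}\left|\sum_{C\in\mathrm{Conj}(G)} |C|^2\,\chi(C)\overline{\chi'(C)}\right|. \] *)

From HB Require Import structures.
From mathcomp Require Import all_boot all_order all_algebra all_fingroup all_solvable all_field all_character frobenius.
Set Implicit Arguments. Unset Strict Implicit. Unset Printing Implicit Defensive.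
Import Order.TTheory GRing.Theory Num.Theory.
Local Open Scope ring_scope.

(* Amenability constants of ZL^1(G) and ZA(G) for a finite group G, given by
   the explicit character-theoretic formulas of the paper (valid for finite G). *)
Definition AMZL (gT : finGroupType) (G : {group gT}) : algC :=
  (#|G|%:R ^+ 2)^-1 *
  \sum_(C in classes G) \sum_(C' in classes G)
     #|C|%:R * #|C'|%:R *
     `| \sum_(i : Iirr G) ('chi[G]_i 1%g) ^+ 2 * 'chi[G]_i (repr C)
                             * ('chi[G]_i (repr C'))^* |.

Definition AMZA (gT : finGroupType) (G : {group gT}) : algC :=
  (#|G|%:R ^+ 2)^-1 *
  \sum_(i : Iirr G) \sum_(j : Iirr G)
     'chi[G]_i 1%g * 'chi[G]_j 1%g *
     `| \sum_(C in classes G) #|C|%:R ^+ 2 * 'chi[G]_i (repr C)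
                                * ('chi[G]_j (repr C))^* |.

(* Both constants are 1 plus a normalised sum of negative parts.  The kernel
   S(x, y) = sum_chi d_chi^2 chi(x) chi(y)^* sums to |G|^2 over G x G, as only the
   trivial character has a nonzero sum over G; and T(chi, psi) =
   sum_x |x^G| chi(x) psi(x)^* sums to |G|^2 against the weights d_chi d_psi, as
   sum_chi d_chi chi is the regular character.  So AMZL = 1 + |G|^-2 sum (|S| - S),
   and likewise for AMZA, whose diagonal terms drop out since T(chi, chi) >= 0.
   For G = K ><| H Frobenius with K and H abelian, Irr(G) consists of the h linear
   characters with K in their kernel and of characters of degree h induced from K,
   which vanish off K; the nontrivial classes in K have size h, those off K size k.
   By the second orthogonality relation S is negative exactly at non-conjugate pairs
   of K, where it is h - h^3, and off the diagonal
   T(chi, psi) = -((h - 1) d_chi d_psi + (k - h) k [K <= ker chi, ker psi]).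
   Both negative parts add up to 2 (h^3 - h) (k - 1) (k + 1 - h). *)

From HB Require Import structures.
From mathcomp Require Import all_boot all_order all_algebra all_fingroup all_solvable all_field all_character frobenius.
From mathcomp Require Import ring.
Import Order.TTheory GRing.Theory Num.Theory.
Set Implicit Arguments. Unset Strict Implicit. Unset Printing Implicit Defensive.
Local Open Scope group_scope.
Local Open Scope ring_scope.

Lemma sum_offdiag_mul (R : pzRingType) (I : finType) (f : I -> R) :
  \sum_i \sum_(j | j != i) f i * f j = (\sum_i f i) ^+ 2 - \sum_i f i ^+ 2.
Proof.
rewrite expr2 big_distrlr /= -sumrB; apply: eq_bigr => i _.
by rewrite [\sum_j _](bigD1 i) //= expr2 addrAC subrr add0r.
Qed.

Definition AMZL_kernel (gT : finGroupType) (G : {group gT}) (x y : gT) : algC :=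
  \sum_(i : Iirr G) 'chi[G]_i 1%g ^+ 2 * 'chi_i x * ('chi_i y)^*.

Definition AMZA_kernel (gT : finGroupType) (G : {group gT}) (i j : Iirr G) : algC :=
  \sum_(x in G) #|x ^: G|%:R * ('chi[G]_i x * ('chi_j x)^*).

Section AmenabilityConstants.

Variables (gT : finGroupType) (G : {group gT}).

Local Notation S := (AMZL_kernel G).
Local Notation T := (@AMZA_kernel _ G).

Lemma AMZL_elementwise :
  AMZL G = (#|G|%:R ^+ 2)^-1 * \sum_(x in G) \sum_(y in G) `|S x y|.
Proof.
have SJ x y g : g \in G -> S (x ^ g) y = S x y /\ S x (y ^ g) = S x y.
  by move=> Gg; split; apply: eq_bigr => i _; rewrite cfunJ.
rewrite /AMZL (sum_by_classes (F := fun x => \sum_(y in G) `|S x y|)); last first.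
  by move=> x g _ Gg; apply: eq_bigr => y _; have [-> _] := SJ x y g Gg.
congr (_ * _); apply: eq_bigr => C _.
rewrite (sum_by_classes (F := fun y => `|S (repr C) y|)); last first.
  by move=> y g _ Gg; have [_ ->] := SJ (repr C) y g Gg.
by rewrite mulr_sumr; apply: eq_bigr => C' _; rewrite mulrA.
Qed.

Lemma AMZA_elementwise :
  AMZA G = (#|G|%:R ^+ 2)^-1 *
    \sum_i \sum_j 'chi[G]_i 1%g * 'chi_j 1%g * `|T i j|.
Proof.
rewrite /AMZA; congr (_ * _); apply: eq_bigr => i _; apply: eq_bigr => j _.
congr (_ * `|_|); rewrite /AMZA_kernel sum_by_classes => [|x g Gx Gg]; last first.
  by rewrite classGidl // !cfunJ.
by apply: eq_bigr => C /repr_classesP[_ defC]; rewrite -defC expr2 !mulrA.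
Qed.

Lemma conjC_irr1 (i : Iirr G) : ('chi_i 1%g)^* = 'chi_i 1%g.
Proof. by rewrite irr1_degree conjC_nat. Qed.

Lemma sum_irr_mul_conj (i j : Iirr G) :
  \sum_(x in G) 'chi_i x * ('chi_j x)^* = #|G|%:R *+ (i == j).
Proof.
have := cfdot_irr i j; rewrite cfdotE => /(congr1 ( *%R #|G|%:R)).
by rewrite mulrA divff ?neq0CG // mul1r mulr_natr.
Qed.

Lemma sum_irr (i : Iirr G) : \sum_(x in G) 'chi_i x = #|G|%:R *+ (i == 0).
Proof.
rewrite -sum_irr_mul_conj; apply: eq_bigr => x Gx.
by rewrite irr0 cfun1E Gx conjC1 mulr1.
Qed.

Lemma sum_AMZL_kernel : \sum_(x in G) \sum_(y in G) S x y = #|G|%:R ^+ 2.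
Proof.
transitivity (\sum_i 'chi[G]_i 1%g ^+ 2 *
               ((\sum_(x in G) 'chi_i x) * (\sum_(y in G) 'chi_i y)^*)).
  rewrite (eq_bigr (fun x => \sum_i \sum_(y in G)
             'chi[G]_i 1%g ^+ 2 * 'chi_i x * ('chi_i y)^*)) => [|x _]; last first.
    exact: exchange_big.
  rewrite exchange_big; apply: eq_bigr => i _.
  rewrite rmorph_sum mulr_suml mulr_sumr; apply: eq_bigr => x _.
  by rewrite !mulr_sumr; apply: eq_bigr => y _; rewrite !mulrA.
rewrite (bigD1 0) //= [X in _ + X]big1 => [|i /negPf nz_i]; last first.
  by rewrite sum_irr nz_i mul0r mulr0.
by rewrite sum_irr eqxx irr0 cfun11 conjC_nat expr1n mul1r addr0 expr2.
Qed.

Lemma sum_AMZA_kernel :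
  \sum_i \sum_j 'chi[G]_i 1%g * 'chi_j 1%g * T i j = #|G|%:R ^+ 2.
Proof.
have reg x : \sum_i 'chi[G]_i 1%g * 'chi_i x = cfReg G x.
  by rewrite cfReg_sum sum_cfunE; apply: eq_bigr => i _; rewrite cfunE.
transitivity (\sum_(x in G) \sum_(i : Iirr G) \sum_(j : Iirr G) #|x ^: G|%:R *
                ('chi[G]_i 1%g * 'chi_i x) * ('chi_j 1%g * 'chi_j x)^*).
  rewrite [RHS]exchange_big; apply: eq_bigr => i _.
  rewrite [RHS]exchange_big; apply: eq_bigr => j _.
  rewrite /AMZA_kernel mulr_sumr; apply: eq_bigr => x _.
  rewrite rmorphM /= conjC_irr1; ring.
transitivity (\sum_(x in G) #|x ^: G|%:R * (cfReg G x * (cfReg G x)^*)).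
  apply: eq_bigr => x _; rewrite -reg rmorph_sum big_distrlr /= mulr_sumr.
  by apply: eq_bigr => i _; rewrite mulr_sumr; apply: eq_bigr => j _; rewrite -mulrA.
rewrite (bigD1 1%g) //= [X in _ + X]big1 => [|x /andP[_ /negPf ntx]]; last first.
  by rewrite cfRegE ntx mul0r mulr0.
by rewrite class1G cards1 cfRegE eqxx mulr1n conjC_nat mul1r addr0 expr2.
Qed.

Lemma AMZA_kernel_diag_ge0 i : 0 <= T i i.
Proof.
by apply: sumr_ge0 => x _; rewrite mulr_ge0 ?ler0n ?mul_conjC_ge0.
Qed.

Lemma AMZL_defect :
  AMZL G = 1 + (#|G|%:R ^+ 2)^-1 *
    \sum_(x in G) \sum_(y in G) (`|S x y| - S x y).
Proof.
have -> : \sum_(x in G) \sum_(y in G) (`|S x y| - S x y) =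
          \sum_(x in G) \sum_(y in G) `|S x y| - #|G|%:R ^+ 2.
  by rewrite -sum_AMZL_kernel -sumrB; apply: eq_bigr => x _; rewrite sumrB.
by rewrite AMZL_elementwise mulrBr mulVf ?expf_neq0 ?neq0CG // addrC subrK.
Qed.

Lemma AMZA_defect :
  AMZA G = 1 + (#|G|%:R ^+ 2)^-1 *
    \sum_i \sum_(j | j != i) 'chi[G]_i 1%g * 'chi_j 1%g * (`|T i j| - T i j).
Proof.
have -> : \sum_i \sum_(j | j != i) 'chi[G]_i 1%g * 'chi_j 1%g * (`|T i j| - T i j) =
    \sum_i \sum_j 'chi[G]_i 1%g * 'chi_j 1%g * (`|T i j| - T i j).
  apply: eq_bigr => i _; rewrite [RHS](bigD1 i) //=.
  by rewrite ger0_norm ?AMZA_kernel_diag_ge0 // subrr mulr0 add0r.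
have -> : \sum_i \sum_j 'chi[G]_i 1%g * 'chi_j 1%g * (`|T i j| - T i j) =
    \sum_i \sum_j 'chi[G]_i 1%g * 'chi_j 1%g * `|T i j| - #|G|%:R ^+ 2.
  rewrite -sum_AMZA_kernel -sumrB; apply: eq_bigr => i _.
  by rewrite -sumrB; apply: eq_bigr => j _; rewrite mulrBr.
by rewrite AMZA_elementwise mulrBr mulVf ?expf_neq0 ?neq0CG // addrC subrK.
Qed.

Lemma card_class_cent1 x : (#|x ^: G| * #|'C_G[x]|)%N = #|G|.
Proof. by rewrite -index_cent1 mulnC Lagrange ?subsetIl. Qed.

End AmenabilityConstants.

Definition Iirr_ker (gT : finGroupType) (G : {group gT}) (A : {set gT}) :
  {set Iirr G} := [set i | A \subset cfker 'chi[G]_i].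

Section AbelianFrobenius.

Variables (gT : finGroupType) (G K H : {group gT}).
Hypotheses (frobG : [Frobenius G = K ><| H]%g) (abK : abelian K) (abH : abelian H).

Local Notation A := (Iirr_ker G K).

Let defG : (K ><| H)%g = G. Proof. by have [] := Frobenius_context frobG. Qed.
Let nsKG : K <| G. Proof. by have [] := sdprod_context defG. Qed.
Let sKG : K \subset G. Proof. exact: normal_sub nsKG. Qed.
Let sHG : H \subset G. Proof. by have [] := sdprod_context defG. Qed.
Let cardG : #|G| = (#|K| * #|H|)%N. Proof. by rewrite (sdprod_card defG). Qed.

Lemma ltn_Frobenius_compl_ker : (#|H| < #|K|)%N.
Proof.
have [_ ntK _ _ _] := Frobenius_context frobG.
have K1_gt0 : (0 < #|K|.-1)%N by rewrite -subn1 subn_gt0 cardG_gt1.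
by rewrite (leq_ltn_trans (dvdn_leq K1_gt0 (Frobenius_dvd_ker1 frobG))) // prednK.
Qed.

Lemma Frobenius_ker_irr_lin i : i \in A -> 'chi_i \is a linear_char.
Proof.
rewrite inE => sKker; rewrite lin_irr_der1; apply: subset_trans sKker.
rewrite der1_min ?normal_norm // -(sdprodW defG) quotientMidl.
exact: quotient_abelian.
Qed.

Lemma Frobenius_ker_irr_on_ker i x : i \in A -> x \in K -> 'chi_i x = 1.
Proof.
move=> Ai Kx; have /[!inE] sKker := Ai.
by rewrite cfker1 ?(subsetP sKker) ?lin_char1 ?Frobenius_ker_irr_lin.
Qed.

Lemma Frobenius_nker_irr_Ind i :
  i \notin A -> exists2 j : Iirr K, j != 0 & 'chi_i = 'Ind[G] 'chi_j.
Proof. by rewrite inE => /(Frobenius_Ind_irrP (FrobeniusWker frobG)). Qed.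

Lemma Frobenius_irr1 i : 'chi_i 1%g = if i \in A then 1 else #|H|%:R.
Proof.
have [Ai | /Frobenius_nker_irr_Ind[j _ ->]] := ifPn.
  exact/lin_char1/Frobenius_ker_irr_lin.
have /char_abelianP/(_ j) lin_j := abK.
by rewrite cfInd1 // -(index_sdprod defG) lin_char1 // mulr1.
Qed.

Lemma Frobenius_nker_irr_out i x : i \notin A -> x \notin K -> 'chi_i x = 0.
Proof. by case/Frobenius_nker_irr_Ind=> j _ ->; apply: cfun_on0 (cfInd_normal _ nsKG). Qed.

Lemma Frobenius_ker_cent1 x : x \in K^# -> 'C_G[x] = K.
Proof.
move=> K1x; apply/eqP; rewrite eqEsubset (Frobenius_cent1_ker frobG) //= subsetI sKG.
by rewrite sub_cent1 (subsetP abK) //; case/setD1P: K1x.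
Qed.

Lemma card_Frobenius_compl_cent1 x : x \in H^# -> #|'C_G[x]| = #|H|.
Proof.
case/setD1P=> ntx Hx; apply/eqP.
rewrite eqn_leq [(#|H| <= _)%N]subset_leq_card ?andbT.
  have regx : 'C_K[x] = 1%g by apply: (Frobenius_reg_ker frobG); rewrite !inE ntx.
  have tiCK : 'C_G[x] :&: K = 1%g by rewrite setIC setIA (setIidPl sKG).
  rewrite -(leq_pmul2r (cardG_gt0 K)) -(TI_cardMg tiCK) [(#|H| * _)%N]mulnC -cardG.
  by rewrite subset_leq_card // mul_subG ?subsetIl.
by rewrite subsetI sHG sub_cent1 (subsetP abH).
Qed.

Lemma card_Frobenius_cent1_out_ker x : x \in G :\: K -> #|'C_G[x]| = #|A|.
Proof.
case/setDP=> Gx notKx; apply/eqP; rewrite -(eqr_nat algC).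
have := second_orthogonality_relation x Gx; rewrite class_refl mulr1n => <-.
rewrite (bigID [in A]) /= [X in _ + X]big1 ?addr0; last first.
  by move=> i /Frobenius_nker_irr_out->; rewrite ?mul0r.
rewrite -sum1_card natr_sum; apply/eqP/eq_bigr => i Ai.
by rewrite -normCK normC_lin_char ?Frobenius_ker_irr_lin ?expr1n.
Qed.

Lemma card_Iirr_Frobenius_ker : #|A| = #|H|.
Proof.
have [_ _ ntH _ _] := Frobenius_context frobG.
have [x Hx ntx] := trivgPn _ ntH.
have [_ _ _ _ tiKH] := sdprod_context defG.
rewrite -(card_Frobenius_cent1_out_ker (x := x)) ?card_Frobenius_compl_cent1 ?inE ?ntx //.
rewrite (subsetP sHG) // andbT; apply: contra ntx => Kx.
have : x \in K :&: H by rewrite inE Kx.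
by rewrite tiKH inE.
Qed.

Lemma card_Frobenius_ker_class x : x \in K^# -> #|x ^: G| = #|H|.
Proof.
move=> K1x; apply/eqP; rewrite -(eqn_pmul2r (cardG_gt0 K)).
by rewrite -{1}(Frobenius_ker_cent1 K1x) card_class_cent1 cardG mulnC.
Qed.

Lemma card_Frobenius_class_out_ker x : x \in G :\: K -> #|x ^: G| = #|K|.
Proof.
move=> GKx; apply/eqP; rewrite -(eqn_pmul2r (cardG_gt0 H)).
rewrite -{1}card_Iirr_Frobenius_ker -(card_Frobenius_cent1_out_ker GKx).
by rewrite card_class_cent1 cardG.
Qed.

Lemma sum_Frobenius_class_size (f : gT -> algC) :
  \sum_(x in G) #|x ^: G|%:R * f x =
    (1 - #|H|%:R) * f 1%g + (#|H|%:R - #|K|%:R) * \sum_(x in K) f x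
    + #|K|%:R * \sum_(x in G) f x.
Proof.
rewrite [\sum_(x in G) f x](big_setID K) [LHS](big_setID K) /= (setIidPr sKG).
rewrite [X in _ + X = _](eq_bigr (fun x => #|K|%:R * f x)); last first.
  by move=> x /card_Frobenius_class_out_ker->.
rewrite (big_setD1 1%g) //= class1G cards1 mul1r.
rewrite (eq_bigr (fun x => #|H|%:R * f x)) => [|x /card_Frobenius_ker_class->//].
by rewrite -!mulr_sumr [\sum_(x in K) f x](big_setD1 1%g) //=; ring.
Qed.

Lemma sum_card_Frobenius_ker_class :
  \sum_(x in K) #|x ^: G|%:R = 1 + (#|K|%:R - 1) * #|H|%:R :> algC.
Proof.
rewrite (big_setD1 1%g) //= class1G cards1.
rewrite (eq_bigr (fun=> #|H|%:R)) => [|x /card_Frobenius_ker_class->//].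
by rewrite sumr_const [#|K|](cardsD1 1%g) group1 add1n -addn1 natrD -mulr_natr; ring.
Qed.

Lemma sum_Iirr_Frobenius_ker_mul_conj x y : x \in K -> y \in K ->
  \sum_(i in A) 'chi_i x * ('chi_i y)^* = #|H|%:R.
Proof.
move=> Kx Ky; rewrite -card_Iirr_Frobenius_ker -sumr_const; apply: eq_bigr => i Ai.
by rewrite !Frobenius_ker_irr_on_ker // conjC1 mulr1.
Qed.

Lemma sum_Iirr_Frobenius_nker_mul_conj x y : ~~ ((x \in K) && (y \in K)) ->
  \sum_(i | i \notin A) 'chi_i x * ('chi_i y)^* = 0.
Proof.
move=> notKxy; apply: big1 => i nAi; case/nandP: notKxy => [notKx | notKy].
  by rewrite (Frobenius_nker_irr_out nAi notKx) mul0r.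
by rewrite (Frobenius_nker_irr_out nAi notKy) conjC0 mulr0.
Qed.

Lemma AMZL_kernel_Frobenius x y : y \in G ->
  AMZL_kernel G x y =
    if (x \in K) && (y \in K) then
      #|H|%:R ^+ 2 * (#|'C_G[x]|%:R *+ (x \in y ^: G)) + #|H|%:R - #|H|%:R ^+ 3
    else #|'C_G[x]|%:R *+ (x \in y ^: G).
Proof.
move=> Gy; rewrite /AMZL_kernel -(second_orthogonality_relation x Gy).
rewrite [LHS](bigID [in A]) [in RHS](bigID [in A]) /=.
rewrite [X in X + _ = _](eq_bigr (fun i => 'chi_i x * ('chi_i y)^*)); last first.
  by move=> i Ai; rewrite Frobenius_irr1 Ai expr1n mul1r.
rewrite [X in _ + X = _](eq_bigr (fun i => #|H|%:R ^+ 2 * ('chi_i x * ('chi_i y)^*))).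
  rewrite -mulr_sumr; case: ifP => [/andP[Kx Ky] | /negbT notKxy].
    by rewrite sum_Iirr_Frobenius_ker_mul_conj //; ring.
  by rewrite sum_Iirr_Frobenius_nker_mul_conj // mulr0 !addr0.
by move=> i /negPf nAi; rewrite Frobenius_irr1 nAi mulrA.
Qed.

Lemma AMZL_kernel_defect_Frobenius x y : y \in G ->
  `|AMZL_kernel G x y| - AMZL_kernel G x y =
    2 * (#|H|%:R ^+ 3 - #|H|%:R) *+ [&& x \in K, y \in K & x \notin y ^: G].
Proof.
move=> Gy; rewrite AMZL_kernel_Frobenius //.
have [Kx|_] /= := boolP (x \in K); last by rewrite normrMn normr_nat subrr.
have [Ky|_] /= := boolP (y \in K); last by rewrite normrMn normr_nat subrr.
have [xGy|_] /= := boolP (x \in y ^: G).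
  have le_HC : (#|H| <= #|'C_G[x]|)%N.
    rewrite (leq_trans (ltnW ltn_Frobenius_compl_ker)) // subset_leq_card //.
    by rewrite subsetI sKG sub_cent1 (subsetP abK).
  rewrite mulr1n ger0_norm ?subrr //.
  rewrite (_ : _ - _ = #|H|%:R ^+ 2 * (#|'C_G[x]|%:R - #|H|%:R) + #|H|%:R); last by ring.
  by rewrite addr_ge0 ?mulr_ge0 ?exprn_ge0 ?subr_ge0 ?ler_nat ?ler0n.
rewrite mulr0n mulr0 add0r ler0_norm; first by ring.
by rewrite subr_le0 -natrX ler_nat -{1}(expn1 #|H|) leq_pexp2l ?cardG_gt0.
Qed.

Lemma sum_Frobenius_ker_nonconj x (c : algC) : x \in K ->
  \sum_(y in G) c *+ ((y \in K) && (x \notin y ^: G)) = c * (#|K|%:R - #|x ^: G|%:R).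
Proof.
move=> Kx; have xGK : x ^: G \subset K by rewrite class_sub_norm ?normal_norm.
rewrite (big_setID K) (setIidPr sKG) /= [X in _ + X]big1 ?addr0; last first.
  by move=> y /setDP[_ /negPf->].
rewrite (big_setID (x ^: G)) (setIidPr xGK) /= big1 ?add0r; last first.
  by move=> y xGy; rewrite class_sym xGy andbF.
rewrite (eq_bigr (fun=> c)) => [|y /setDP[Ky nxGy]]; last by rewrite Ky class_sym nxGy.
by rewrite sumr_const cardsD (setIidPr xGK) -[c *+ _]mulr_natr natrB ?subset_leq_card.
Qed.

Lemma AMZL_Frobenius :
  AMZL G = 1 + (#|G|%:R ^+ 2)^-1 * (2 * (#|H|%:R ^+ 3 - #|H|%:R) *
             ((#|K|%:R - 1) * (#|K|%:R + 1 - #|H|%:R))).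
Proof.
rewrite AMZL_defect; congr (1 + _ * _).
transitivity (\sum_(x in K)
    2 * ((#|H|%:R : algC) ^+ 3 - #|H|%:R) * (#|K|%:R - #|x ^: G|%:R)).
  rewrite (big_setID K) (setIidPr sKG) /= [X in _ + X]big1 ?addr0; last first.
    move=> x /setDP[_ /negPf notKx]; apply: big1 => y Gy.
    by rewrite AMZL_kernel_defect_Frobenius ?notKx.
  apply: eq_bigr => x Kx; rewrite -sum_Frobenius_ker_nonconj //.
  by apply: eq_bigr => y Gy; rewrite AMZL_kernel_defect_Frobenius ?Kx.
rewrite -mulr_sumr sumrB sumr_const sum_card_Frobenius_ker_class -mulr_natl; ring.
Qed.

Lemma sum_Frobenius_irr1_exp n :
  \sum_i 'chi[G]_i 1%g ^+ n = #|H|%:R + #|~: A|%:R * #|H|%:R ^+ n.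
Proof.
rewrite (bigID [in A]) /=; congr (_ + _).
  rewrite -card_Iirr_Frobenius_ker -sumr_const; apply: eq_bigr => i Ai.
  by rewrite Frobenius_irr1 Ai expr1n.
rewrite mulr_natl -sumr_const.
by apply: eq_big => [i | i /negPf nAi]; rewrite ?in_setC // Frobenius_irr1 nAi.
Qed.

Lemma card_Iirr_Frobenius_nker : #|~: A|%:R * #|H|%:R = #|K|%:R - 1 :> algC.
Proof.
apply: (mulIf (neq0CG H)); have := sum_Frobenius_irr1_exp 2.
rewrite irr_sum_square cardG natrM mulrBl mul1r => ->; ring.
Qed.

Lemma sum_indicator_Iirr_Frobenius_ker n :
  \sum_i (i \in A)%:R ^+ n.+1 = #|H|%:R :> algC.
Proof.
rewrite -card_Iirr_Frobenius_ker -sumr_const [RHS]big_mkcond /=.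
by apply: eq_bigr => i _; case: (i \in A); rewrite ?expr1n ?expr0n.
Qed.

Lemma sum_on_Frobenius_ker_irr_mul_conj i j : i != j ->
  \sum_(x in K) 'chi_i x * ('chi_j x)^* = #|K|%:R *+ ((i \in A) && (j \in A)).
Proof.
move=> nij; have [/andP[Ai Aj] | notAij] := boolP ((i \in A) && (j \in A)).
  rewrite -sumr_const; apply: eq_bigr => x Kx.
  by rewrite !Frobenius_ker_irr_on_ker // conjC1 mulr1.
have -> : #|K|%:R *+ false = #|G|%:R *+ (i == j) :> algC by rewrite (negPf nij).
rewrite -sum_irr_mul_conj [RHS](big_setID K) (setIidPr sKG) [X in _ = _ + X]big1 ?addr0 //.
move=> x /setDP[_ notKx]; case/nandP: notAij => [nAi | nAj].
  by rewrite (Frobenius_nker_irr_out nAi notKx) mul0r.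
by rewrite (Frobenius_nker_irr_out nAj notKx) conjC0 mulr0.
Qed.

Lemma AMZA_kernel_Frobenius i j : i != j ->
  AMZA_kernel i j = - ((#|H|%:R - 1) * ('chi_i 1%g * 'chi_j 1%g)
                       + (#|K|%:R - #|H|%:R) * #|K|%:R *+ ((i \in A) && (j \in A))).
Proof.
move=> nij; rewrite /AMZA_kernel sum_Frobenius_class_size sum_irr_mul_conj (negPf nij).
rewrite sum_on_Frobenius_ker_irr_mul_conj // conjC_irr1.
by case: (_ && _); rewrite /= ?mulr1n ?mulr0n; ring.
Qed.

Lemma AMZA_kernel_defect_Frobenius i j : i != j ->
  'chi_i 1%g * 'chi_j 1%g * (`|AMZA_kernel i j| - AMZA_kernel i j) =
    2 * ((#|H|%:R - 1) * ('chi_i 1%g ^+ 2 * 'chi_j 1%g ^+ 2)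
         + (#|K|%:R - #|H|%:R) * #|K|%:R * ((i \in A)%:R * (j \in A)%:R)).
Proof.
move=> nij; rewrite AMZA_kernel_Frobenius // normrN opprK ger0_norm; last first.
  have le_HK : (#|H| <= #|K|)%N by exact/ltnW/ltn_Frobenius_compl_ker.
  have irr1_ge0 k : 0 <= 'chi[G]_k 1%g by exact/ltW/irr1_gt0.
  by rewrite addr_ge0 ?mulrn_wge0 ?mulr_ge0 ?irr1_ge0 ?subr_ge0 ?ler_nat ?ler1n ?cardG_gt0.
rewrite !Frobenius_irr1.
by case: (i \in A); case: (j \in A); rewrite /= ?mulr1n ?mulr0n; ring.
Qed.

Lemma AMZA_Frobenius :
  AMZA G = 1 + (#|G|%:R ^+ 2)^-1 * (2 * (#|H|%:R ^+ 3 - #|H|%:R) *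
             ((#|K|%:R - 1) * (#|K|%:R + 1 - #|H|%:R))).
Proof.
rewrite AMZA_defect; congr (1 + _ * _).
transitivity (2 * ((#|H|%:R - 1) *
    \sum_i \sum_(j | j != i) 'chi[G]_i 1%g ^+ 2 * 'chi_j 1%g ^+ 2
  + (#|K|%:R - #|H|%:R) * #|K|%:R *
    \sum_(i : Iirr G) \sum_(j | j != i) (i \in A)%:R * (j \in A)%:R)).
  rewrite mulrDr !mulrA !mulr_sumr -big_split; apply: eq_bigr => i _.
  rewrite !mulr_sumr -big_split; apply: eq_bigr => j nji.
  by rewrite AMZA_kernel_defect_Frobenius 1?eq_sym // mulrDr !mulrA.
rewrite !sum_offdiag_mul irr_sum_square; under eq_bigr do rewrite -exprM.
rewrite sum_Frobenius_irr1_exp (sum_indicator_Iirr_Frobenius_ker 0).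
rewrite sum_indicator_Iirr_Frobenius_ker.
rewrite (_ : _ * #|H|%:R ^+ 4 = #|~: A|%:R * #|H|%:R * #|H|%:R ^+ 3); last by ring.
by rewrite card_Iirr_Frobenius_nker cardG natrM; ring.
Qed.

End AbelianFrobenius.

Theorem theorem2p2 (gT : finGroupType) (G K H : {group gT}) :
  [Frobenius G = K ><| H]%g -> abelian K -> abelian H ->
  let k : algC := #|K|%:R in
  let h : algC := #|H|%:R in
  AMZA G = AMZL G /\
  AMZL G = 1 + (2 * (h ^+ 2 - 1) / h) * (1 - (h - 1) / k) * (1 - 1 / k).
Proof.
move=> frobG abK abH k h.
rewrite (AMZA_Frobenius frobG abK abH) (AMZL_Frobenius frobG abK abH); split=> //.
have [defG _ _ _ _] := Frobenius_context frobG.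
rewrite -(sdprod_card defG) natrM -/k -/h.
by field; rewrite ?neq0CG.
Qed.
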